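(* Let $\phi:\langle S\mid R\rangle\to\mathbb{Z}^n$ be an isomorphism where $\langle S\mid R\rangle$ is a 3-presentation, let $S'\subseteq S$, and let $d=\dim S'$. Then there exist words $w_1,\dots,w_d$ in the free group on $S$ such that, letting $R''$ consist of the words obtained from each element of $R\cup\{w_1,\dots,w_d\}$ by deleting every occurrence of every generator in $S'$, we have $\langle S\setminus S'\mid R''\rangle\cong\mathbb{Z}^{n-d}$ (and $|R''|=|R|+d$).
   Context: A 3-presentation of a group $G$ is a group presentation $\langle S\mid R\rangle\cong G$ (with $S,R$ finite) in which each relation is the empty word, $g^a$, $g^ah^b$, or $g^ah^bi^c$ with $g,h,i\in S$ and $a,b,c\in\mathbb{Z}$. For $S'\subseteq S$, $\dim S'=\dim\operatorname{span}_{\mathbb{R}}\{\phi(g):g\in S'\}$, viewing $\phi(g)\in\mathbb{Z}^n\subseteq\mathbb{R}^n$. *)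

From HB Require Import structures.
From mathcomp Require Import all_boot all_order all_algebra.
From mathcomp Require Import Rstruct.
From Stdlib Require Import Relations.
From Stdlib Require Reals.
Set Implicit Arguments. Unset Strict Implicit. Unset Printing Implicit Defensive.
Import Order.TTheory GRing.Theory Num.Theory.
Local Open Scope ring_scope.

(* A word in the free group on generators of type T, written as a list of
   syllables (g, a) standing for g^a (not necessarily freely reduced). *)
Definition word (T : Type) := seq (T * int).

Definition word_over (T : finType) (S : {set T}) (w : word T) : bool :=
  all (fun p => p.1 \in S) w.

(* One elementary move in the presented group <S | R>: deleting (or, via the
   symmetric closure, inserting) a relator anywhere, merging adjacent powers
   of the same generator, and deleting a zero power.  Free reduction
   x^a x^-a -> x^0 -> empty is a special case. *)
Inductive pstep (T : Type) (R : seq (word T)) : word T -> word T -> Prop :=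
| pstep_rel u v r : List.In r R -> pstep R (u ++ r ++ v) (u ++ v)
| pstep_merge u v x (a b : int) :
    pstep R (u ++ (x, a) :: (x, b) :: v) (u ++ (x, a + b) :: v)
| pstep_zero u v x : pstep R (u ++ (x, 0) :: v) (u ++ v).

Definition pequiv (T : Type) (R : seq (word T)) : relation (word T) :=
  clos_refl_sym_trans _ (pstep R).

Definition evalw (T : Type) (n : nat) (phi : T -> 'rV[int]_n) (w : word T)
  : 'rV[int]_n := \sum_(p <- w) (phi p.1 *~ p.2).

(* The map g |-> phi g on generators induces an isomorphism <S | R> -> Z^n:
   its kernel is exactly the trivial element and it is surjective.  (That the
   map is well-defined, i.e. kills R, follows from the kernel condition.) *)
Definition pres_iso (T : finType) (S : {set T}) (R : seq (word T)) (n : nat)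
  (phi : T -> 'rV[int]_n) : Prop :=
  (forall w, word_over S w -> (evalw phi w = 0 <-> pequiv R w [::])) /\
  (forall v : 'rV[int]_n, exists2 w, word_over S w & evalw phi w = v).

Definition pres_isoZn (T : finType) (S : {set T}) (R : seq (word T)) (n : nat)
  : Prop := exists phi : T -> 'rV[int]_n, pres_iso S R phi.

Definition three_pres (T : finType) (S : {set T}) (R : seq (word T)) : bool :=
  all (fun r => (size r <= 3)%N && word_over S r) R.

Definition dimgen (T : finType) (n : nat) (phi : T -> 'rV[int]_n)
  (S' : {set T}) : nat :=
  \dim <<[seq map_mx (fun z : int => z%:~R : Reals.Rdefinitions.R) (phi g)
          | g <- enum S']>>%VS.

Definition delete_gens (T : finType) (S' : {set T}) (w : word T) : word T :=
  [seq p <- w | p.1 \notin S'].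

From HB Require Import structures.
From mathcomp Require Import all_boot all_order all_algebra.
From mathcomp Require Import Rstruct zify.
From Stdlib Require Import Relations.
Set Implicit Arguments. Unset Strict Implicit. Unset Printing Implicit Defensive.
Import Order.TTheory GRing.Theory Num.Theory.
Local Open Scope ring_scope.
Import VectorInternalTheory.

(* Let M be the integer matrix whose rows are the vectors phi g, g in S', and
   d = dim S' its rank over R.  By the Smith normal form there is a unimodular
   B such that the rows of M B^-1 vanish beyond the first d coordinates,
   i.e. phi(S') lies in the span of the first d rows of B.  We take for
   w_1, ..., w_d words over S representing these rows, and define
   phi' = phi B^-1 followed by the projection onto the last n - d coordinates.
   Then phi' kills S', so evaluation under phi' ignores the deletion of S', and
   it kills all new relators (soundness).  Conversely, if a word w over
   S \ S' is killed by phi', then phi(w) is an integer combination of the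
   rows of B of index < d; correcting w by the corresponding powers of the
   w_i gives a word trivial in <S | R>, and deleting S' along that derivation
   shows w trivial in the new presentation (completeness).  Surjectivity of
   phi' comes from that of phi. *)

Definition rows_mx (K : nmodType) n (X : seq 'rV[K]_n) : 'M[K]_(size X, n) :=
  \matrix_(i < size X) X`_i.

Lemma dim_span_rank (F : fieldType) n (X : seq 'rV[F]_n) :
  \dim <<X>>%VS = \rank (rows_mx X).
Proof.
rewrite [@span _ _]unlock /dimv genmxE.
set G := lin1_mx (v2r : 'rV[F]_n -> _).
have -> : b2mx (in_tuple X) = rows_mx X *m G.
  apply/row_matrixP => i; rewrite row_mul /rows_mx !rowK mul_rV_lin1 (tnth_nth 0) //.
have G_inv : G *m lin1_mx (r2v : _ -> 'rV[F]_n) = 1%:M.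
  apply/row_matrixP => i; rewrite !rowE mulmxA !mul_rV_lin1 /=.
  by rewrite v2rK mulmx1.
rewrite mxrankMfree // /row_free eqn_leq rank_leq_row /=.
by rewrite -{1}(mxrank1 F n) -G_inv mxrankM_maxl.
Qed.

Lemma rank_rows_map (F : fieldType) n (f : int -> F) (X : seq 'rV[int]_n) :
  \rank (rows_mx (map (map_mx f) X)) = \rank (map_mx f (rows_mx X)).
Proof.
have e : (size X = size (map (map_mx f) X)) * (n = n) by rewrite size_map.
rewrite -(eqmx_cast _ e) /rows_mx; congr (\rank _); apply/matrixP => i j.
rewrite castmxE !mxE /= (nth_map 0) ?mxE ?cast_ord_id //.
by rewrite -(size_map (map_mx f)) ltn_ord.
Qed.

Lemma dimgen_rank (T : finType) n (phi : T -> 'rV[int]_n) (S' : {set T}) :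
  dimgen phi S' =
  \rank (map_mx intr (rows_mx [seq phi g | g <- enum S']) : 'M[Reals.Rdefinitions.R]_(_, n)).
Proof. by rewrite /dimgen dim_span_rank -rank_rows_map -map_comp. Qed.

Lemma sorted_dvdz_zero_tail (s : seq int) m : sorted dvdz s ->
  exists2 r, (r <= m)%N & forall i, (i < m)%N -> (s`_i == 0) = (r <= i)%N.
Proof.
move=> s_sorted; set r := find (eq_op^~ 0) (take m s).
have le_rm : (r <= m)%N.
  by apply: leq_trans (find_size _ _) _; rewrite size_take_min geq_minl.
exists r => // i lt_im; case: ltnP => [lt_ir|le_ri].
  by have := before_find 0 lt_ir; rewrite nth_take // => /negbT.
have [lt_is|] := ltnP i (size s); last by move=> le_si; rewrite nth_default.
have has0 : has (eq_op^~ 0) (take m s).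
  by rewrite has_find; apply: leq_ltn_trans le_ri _; rewrite size_take_min leq_min lt_im.
have /eqP sr0 := nth_find 0 has0; rewrite nth_take ?(leq_ltn_trans le_ri) // in sr0.
have lt_rs : (r < size s)%N by apply: leq_ltn_trans le_ri lt_is.
have := sorted_leq_nth (@dvdz_trans) (@dvdzz) 0 s_sorted r i lt_rs lt_is le_ri.
by rewrite sr0 dvd0z.
Qed.

Lemma intr_unitmx (F : fieldType) n (A : 'M[int]_n) :
  A \in unitmx -> (map_mx intr A : 'M[F]_n) \in unitmx.
Proof.
move=> A_unit; have := mulmxV A_unit; move/(congr1 (map_mx (intr : int -> F))).
by rewrite map_mxM map_mx1 => /mulmx1_unit [].
Qed.

(* Consequence of the Smith normal form: after an integral change of basis B
   of Z^n, the rows of an integer matrix of rank r (over a field of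
   characteristic 0) are supported on the first r coordinates. *)
Lemma int_rank_normal_form (F : numFieldType) k n (M : 'M[int]_(k, n)) :
  exists r (B : 'M[int]_n), [/\ B \in unitmx,
    \rank (map_mx intr M : 'M[F]_(k, n)) = r &
    forall i (j : 'I_n), (r <= j)%N -> (M *m invmx B) i j = 0].
Proof.
have [L L_unit [B B_unit [dd dd_sorted defM]]] := int_Smith_normal_form M.
have [r le_r_kn dd0] := sorted_dvdz_zero_tail (minn k n) dd_sorted.
set D := \matrix_(i, j) _ in defM.
have diag_lt (i : 'I_k) (j : 'I_n) : (i : nat) = j -> (j < minn k n)%N.
  by move=> eq_ij; rewrite leq_min -{1}eq_ij !ltn_ord.
have D0 i (j : 'I_n) : (r <= j)%N -> D i j = 0.
  move=> le_rj; rewrite mxE; case: eqP => [eq_ij|]; last by rewrite mulr0n.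
  by move: (dd0 j (diag_lt _ _ eq_ij)); rewrite le_rj eq_ij => /eqP ->; rewrite mul0rn.
exists r, B; split=> //; last first.
  by move=> i j le_rj; rewrite defM mulmxK // mxE big1 // => l _; rewrite D0 ?mulr0.
pose e : 'rV[F]_n := \row_j (if (j < r)%N then intr dd`_j else 1).
have e_unit : diag_mx e \in unitmx.
  rewrite unitmxE det_diag unitfE; apply/prodf_neq0 => j _; rewrite mxE.
  case: ltnP => lt_jr; last exact: oner_neq0.
  by rewrite intr_eq0 dd0 ?(leq_trans lt_jr) // -ltnNge.
have D_pid : map_mx intr D = pid_mx r *m diag_mx e.
  apply/matrixP => i j; rewrite mul_mx_diag !mxE.
  case: (eqVneq (i : nat) j) => [eq_ij|ne_ij]; last by rewrite mul0r mulr0n.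
  rewrite -eq_ij; case: ltnP => [lt_ir|le_ri]; first by rewrite mul1r mulr1n.
  have /eqP dd_i0 : dd`_i == 0 by rewrite dd0 ?le_ri // eq_ij (diag_lt _ _ eq_ij).
  by rewrite dd_i0 mul0r mulr1n mulr0z.
rewrite defM !map_mxM mxrankMfree ?row_free_unit ?intr_unitmx //.
rewrite (eqmxMfull _ _) ?row_full_unit ?intr_unitmx // D_pid.
rewrite mxrankMfree ?row_free_unit // rank_pid_mx //.
  by apply: leq_trans le_r_kn (geq_minl _ _).
by apply: leq_trans le_r_kn (geq_minr _ _).
Qed.

Section TailProjection.
Variables (K : pzRingType) (n r : nat).

Lemma tail_ord_proof (j : 'I_(n - r)) : (r + j < n)%N.
Proof. by have := ltn_ord j; lia. Qed.

Definition tail_ord (j : 'I_(n - r)) : 'I_n := Ordinal (tail_ord_proof j).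

Definition tail_proj : 'M[K]_(n, n - r) := \matrix_(i, j) ((i : nat) == r + j)%:R.

Lemma tail_projE (u : 'rV[K]_n) j : (u *m tail_proj) 0 j = u 0 (tail_ord j).
Proof.
rewrite !mxE (bigD1 (tail_ord j)) //= mxE eqxx mulr1 big1 ?addr0 // => l ne_lj.
rewrite mxE (_ : _ == _ = false) ?mulr0 //; apply/negbTE.
by apply: contra ne_lj => /eqP eq_l; apply/eqP/val_inj.
Qed.

Lemma tail_proj_eq0 (u : 'rV[K]_n) :
  u *m tail_proj = 0 <-> forall j : 'I_n, (r <= j)%N -> u 0 j = 0.
Proof.
split=> [u0 j le_rj | u_tail0]; last first.
  by apply/rowP => j; rewrite tail_projE mxE u_tail0 // leq_addr.
have lt_j : (j - r < n - r)%N by have := ltn_ord j; lia.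
have <- : tail_ord (Ordinal lt_j) = j by apply: val_inj => /=; lia.
by rewrite -tail_projE u0 mxE.
Qed.

Lemma tail_projK (v : 'rV[K]_(n - r)) : v *m tail_proj^T *m tail_proj = v.
Proof.
apply/rowP => j; rewrite tail_projE !mxE (bigD1 j) //= !mxE eqxx mulr1.
rewrite big1 ?addr0 // => l ne_lj; rewrite !mxE (_ : _ == _ = false) ?mulr0 //.
by apply/negbTE; apply: contra ne_lj; rewrite /= eqn_add2l => /eqP eq_l; apply/eqP/val_inj.
Qed.

End TailProjection.

Lemma InP (X : eqType) (x : X) (s : seq X) : reflect (List.In x s) (x \in s).
Proof.
elim: s => [|y s IH]; first by constructor.
rewrite in_cons; apply: (iffP orP) => [[/eqP ->|/IH]|[->|/IH]]; by [left|right|left|right].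
Qed.

Section Words.
Variable T : Type.
Implicit Types (R : seq (word T)) (u v w : word T).

Definition winv w : word T := rev (map (fun p => (p.1, - p.2)) w).
Definition nrep w (m : nat) : word T := flatten (nseq m w).
Definition zpow w (c : int) : word T :=
  match c with Posz m => nrep w m | Negz m => nrep (winv w) m.+1 end.

Lemma winv_cons p w : winv (p :: w) = winv w ++ [:: (p.1, - p.2)].
Proof. by rewrite /winv map_cons rev_cons cats1. Qed.

Lemma pstep_ctx R a b u v : pstep R u v -> pstep R (a ++ u ++ b) (a ++ v ++ b).
Proof.
case=> [u' v' r Hr|u' v' x c d|u' v' x].
- by have := pstep_rel (a ++ u') (v' ++ b) Hr; rewrite -!catA.
- by have := pstep_merge R (a ++ u') (v' ++ b) x c d; rewrite -!catA.
- by have := pstep_zero R (a ++ u') (v' ++ b) x; rewrite -!catA.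
Qed.

Lemma pequiv_ctx R a b u v : pequiv R u v -> pequiv R (a ++ u ++ b) (a ++ v ++ b).
Proof.
elim=> [x y xy|x|x y _ IH|x y z _ IH1 _ IH2].
- exact/rst_step/pstep_ctx.
- exact: rst_refl.
- exact: rst_sym.
- exact: rst_trans IH2.
Qed.

Lemma pequiv_cat R u u' v v' : pequiv R u u' -> pequiv R v v' ->
  pequiv R (u ++ v) (u' ++ v').
Proof.
move=> uu' vv'; apply: (rst_trans _ _ _ (u' ++ v)).
  by have := pequiv_ctx [::] v uu'; rewrite /=.
by have := pequiv_ctx u' [::] vv'; rewrite !cats0.
Qed.

Lemma winv_cancel R w : pequiv R (winv w ++ w) [::].
Proof.
elim: w => [|[x a] w IH]; first exact: rst_refl.
rewrite winv_cons -catA /=; apply: rst_trans IH.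
apply: (rst_trans _ _ _ (winv w ++ (x, 0) :: w)); apply: rst_step.
  by have := pstep_merge R (winv w) w x (- a) a; rewrite addNr.
exact: pstep_zero.
Qed.

Lemma rel_triv R r : List.In r R -> pequiv R r [::].
Proof. by move=> Hr; apply: rst_step; have := pstep_rel [::] [::] Hr; rewrite /= cats0. Qed.

Lemma winv_triv R u : pequiv R u [::] -> pequiv R (winv u) [::].
Proof.
move=> u1; apply: rst_trans (winv_cancel R u).
by have := pequiv_cat (rst_refl _ _ (winv u)) (rst_sym _ _ _ _ u1); rewrite cats0.
Qed.

Lemma zpow_triv R u c : pequiv R u [::] -> pequiv R (zpow u c) [::].
Proof.
have nrep_triv v m : pequiv R v [::] -> pequiv R (nrep v m) [::].
  by move=> v1; elim: m => [|m IH]; [exact: rst_refl | have := pequiv_cat v1 IH].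
by move=> u1; case: c => m /=; apply: nrep_triv => //; apply: winv_triv.
Qed.

Lemma flatten_triv R (ss : seq (word T)) :
  (forall s, List.In s ss -> pequiv R s [::]) -> pequiv R (flatten ss) [::].
Proof.
elim: ss => [|s ss IH] ss1 /=; first exact: rst_refl.
have s1 : pequiv R s [::] by apply: ss1; left.
by have := pequiv_cat s1 (IH (fun x xs => ss1 x (or_intror xs))).
Qed.

End Words.

Section Eval.
Variables (T : Type) (n : nat) (f : T -> 'rV[int]_n).
Implicit Types (R : seq (word T)) (u v w : word T).

Lemma evalw_cat u v : evalw f (u ++ v) = evalw f u + evalw f v.
Proof. by rewrite /evalw big_cat. Qed.

Lemma evalw_nil : evalw f [::] = 0.
Proof. by rewrite /evalw big_nil. Qed.

Lemma evalw_cons p w : evalw f (p :: w) = f p.1 *~ p.2 + evalw f w.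
Proof. by rewrite /evalw big_cons. Qed.

Lemma evalw_winv w : evalw f (winv w) = - evalw f w.
Proof.
elim: w => [|p w IH]; first by rewrite /winv /= evalw_nil oppr0.
by rewrite winv_cons evalw_cat IH !evalw_cons evalw_nil addr0 mulrNz opprD addrC.
Qed.

Lemma evalw_zpow w c : evalw f (zpow w c) = evalw f w *~ c.
Proof.
have evalw_nrep v m : evalw f (nrep v m) = evalw f v *+ m.
  by elim: m => [|m IH]; rewrite ?evalw_nil // /nrep /= evalw_cat -/(nrep v m) IH mulrS.
by case: c => m /=; rewrite evalw_nrep ?evalw_winv // NegzE mulrNz mulNrn.
Qed.

Lemma evalw_flatten (ss : seq (word T)) :
  evalw f (flatten ss) = \sum_(s <- ss) evalw f s.
Proof. by elim: ss => [|s ss IH]; rewrite ?big_nil ?evalw_nil //= evalw_cat IH big_cons. Qed.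

Lemma evalw_pequiv R u v : (forall r, List.In r R -> evalw f r = 0) ->
  pequiv R u v -> evalw f u = evalw f v.
Proof.
move=> R0; elim=> // [x y []|x y z _ -> _ ->] //.
- by move=> u' v' r /R0; rewrite !evalw_cat => ->; rewrite add0r.
- by move=> u' v' x' a b; rewrite !evalw_cat !evalw_cons /= mulrzDr !addrA.
- by move=> u' v' x'; rewrite !evalw_cat !evalw_cons /= mulr0z add0r.
Qed.

End Eval.

Lemma evalw_mulmx (T : Type) n m (f : T -> 'rV[int]_n) (M : 'M[int]_(n, m)) w :
  evalw (fun g => f g *m M) w = evalw f w *m M.
Proof.
elim: w => [|p w IH]; first by rewrite !evalw_nil mul0mx.
by rewrite !evalw_cons IH mulmxDl; congr (_ + _); rewrite -(raddfMz (mulmxr M)).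
Qed.

Section Delete.
Variables (T : finType) (S' : {set T}).
Implicit Types (R : seq (word T)) (u v w : word T).
Local Notation del := (delete_gens S').

Lemma del_cat u v : del (u ++ v) = del u ++ del v.
Proof. exact: filter_cat. Qed.

Lemma del_zpow w c : del (zpow w c) = zpow (del w) c.
Proof.
have del_nrep v m : del (nrep v m) = nrep (del v) m.
  by elim: m => //= m IH; rewrite del_cat IH.
have del_winv : del (winv w) = winv (del w).
  by rewrite /delete_gens /winv filter_rev filter_map.
by case: c => m /=; rewrite del_nrep ?del_winv.
Qed.

Lemma del_pequiv R R2 u v : (forall r, List.In r R -> List.In (del r) R2) ->
  pequiv R u v -> pequiv R2 (del u) (del v).
Proof.
move=> RR2; elim=> [x y []|x|x y _ IH|x y z _ IH1 _ IH2].
- by move=> u' v' r /RR2 Hr; rewrite !del_cat; apply/rst_step/pstep_rel.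
- move=> u' v' x' a b; rewrite !del_cat /delete_gens /=.
  by case: (x' \in S'); [exact: rst_refl | exact/rst_step/pstep_merge].
- move=> u' v' x'; rewrite !del_cat /delete_gens /=.
  by case: (x' \in S'); [exact: rst_refl | exact/rst_step/pstep_zero].
- exact: rst_refl.
- exact: rst_sym.
- exact: rst_trans IH2.
Qed.

Lemma evalw_del n (f : T -> 'rV[int]_n) w :
  {in S', forall g, f g = 0} -> evalw f (del w) = evalw f w.
Proof.
move=> f0; elim: w => [|[g a] w IH] //; rewrite /delete_gens /=.
case: ifPn => gS'; rewrite !evalw_cons -/(del w) IH //=.
by rewrite f0 ?mul0rz ?add0r //; move/negbNE: gS'.
Qed.

Lemma del_over (S : {set T}) w : word_over (S :\: S') w -> del w = w.
Proof. by move/allP=> wS; apply/all_filterP/allP => p /wS; rewrite in_setD => /andP []. Qed.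

Lemma over_setD (S : {set T}) w : word_over (S :\: S') w -> word_over S w.
Proof. by move/allP=> wS; apply/allP => p /wS; rewrite in_setD => /andP []. Qed.

Lemma over_del (S : {set T}) w : word_over S w -> word_over (S :\: S') (del w).
Proof. by move/allP=> wS; apply/allP => p; rewrite mem_filter in_setD => /andP [-> /wS]. Qed.

End Delete.

Section Over.
Variables (T : finType) (S : {set T}).

Lemma word_over_cat u v : word_over S (u ++ v) = word_over S u && word_over S v.
Proof. exact: all_cat. Qed.

Lemma word_over_zpow w c : word_over S w -> word_over S (zpow w c).
Proof.
have over_nrep v m : word_over S v -> word_over S (nrep v m).
  by move=> vS; elim: m => //= m IH; rewrite word_over_cat vS.
move=> wS; case: c => m /=; apply: over_nrep => //.
by rewrite /word_over /winv all_rev all_map.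
Qed.

Lemma word_over_flatten (ss : seq (word T)) :
  all (word_over S) ss -> word_over S (flatten ss).
Proof. by elim: ss => //= s ss IH /andP [sS /IH]; rewrite word_over_cat sS. Qed.

End Over.

Lemma mem_take_ord n r (i : 'I_n) : (i \in take r (enum 'I_n)) = (i < r)%N.
Proof. by rewrite in_take ?mem_enum // index_enum_ord. Qed.

Section Quotient.
Variables (T : finType) (S S' : {set T}) (R : seq (word T)) (n : nat).
Variable phi : T -> 'rV[int]_n.
Hypothesis R_over : all (word_over S) R.
Hypothesis phi_iso : pres_iso S R phi.
Variables (r : nat) (B : 'M[int]_n).
Hypothesis B_unit : B \in unitmx.
Hypothesis S'_head :
  forall g (j : 'I_n), g \in S' -> (r <= j)%N -> (phi g *m invmx B) 0 j = 0.

Local Notation del := (delete_gens S').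

(* Surjectivity of phi, in boolean form suitable for choice. *)
Lemma lift_exists (v : 'rV[int]_n) : exists w, word_over S w && (evalw phi w == v).
Proof. by have [w wS <-] := phi_iso.2 v; exists w; rewrite wS eqxx. Qed.

Definition basis_word (i : 'I_n) : word T := xchoose (lift_exists (row i B)).

Lemma basis_word_over i : word_over S (basis_word i).
Proof. by have /andP [] := xchooseP (lift_exists (row i B)). Qed.

Lemma evalw_basis_word i : evalw phi (basis_word i) = row i B.
Proof. by have /andP [_ /eqP] := xchooseP (lift_exists (row i B)). Qed.

Definition new_rels : seq (word T) := [seq basis_word i | i <- take r (enum 'I_n)].

Lemma size_new_rels : (r <= n)%N -> size new_rels = r.
Proof. by move=> le_rn; rewrite size_map size_takel // size_enum_ord. Qed.

Lemma new_rels_over : all (word_over S) new_rels.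
Proof. by apply/allP => w /mapP [i _ ->]; apply: basis_word_over. Qed.

Local Notation R'' := (map del (R ++ new_rels)).

Lemma R''_rel w : List.In w R -> List.In (del w) R''.
Proof. by move=> wR; apply/List.in_map/List.in_or_app; left. Qed.

Lemma R''_new_rel (i : 'I_n) : (i < r)%N -> List.In (del (basis_word i)) R''.
Proof.
move=> lt_ir; apply/List.in_map/List.in_or_app; right.
by apply/InP/map_f; rewrite mem_take_ord.
Qed.

Definition quot_mx : 'M[int]_(n, n - r) := invmx B *m @tail_proj int n r.

Definition quot_map (g : T) : 'rV[int]_(n - r) := phi g *m quot_mx.

Lemma evalw_quot w : evalw quot_map w = evalw phi w *m quot_mx.
Proof. exact: evalw_mulmx. Qed.

Lemma quot_mx_eq0 (v : 'rV[int]_n) :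
  v *m quot_mx = 0 <-> forall j : 'I_n, (r <= j)%N -> (v *m invmx B) 0 j = 0.
Proof. by rewrite mulmxA; apply: tail_proj_eq0. Qed.

Lemma quot_map_S' : {in S', forall g, quot_map g = 0}.
Proof. by move=> g gS'; apply/quot_mx_eq0 => j; apply: S'_head. Qed.

Lemma evalw_quot_del w : evalw quot_map (del w) = evalw quot_map w.
Proof. exact/evalw_del/quot_map_S'. Qed.

Lemma quot_rels w : List.In w R'' -> evalw quot_map w = 0.
Proof.
case/List.in_map_iff => u [<- u_in].
rewrite evalw_quot_del evalw_quot.
case: (List.in_app_or _ _ _ u_in) => [uR | /InP /mapP [i]]; last first.
  rewrite mem_take_ord => lt_ir ->; rewrite evalw_basis_word.
  apply/quot_mx_eq0 => j le_rj; rewrite -row_mul mulmxV // !mxE.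
  by case: eqP => // eq_ij; move: lt_ir; rewrite eq_ij ltnNge le_rj.
have uS : word_over S u by apply: (allP R_over); apply/InP.
by rewrite (proj2 (phi_iso.1 u uS) (rel_triv uR)) mul0mx.
Qed.

Lemma quot_sound w : pequiv R'' w [::] -> evalw quot_map w = 0.
Proof. by move/(evalw_pequiv quot_rels); rewrite evalw_nil. Qed.

Definition comb_word (c : 'rV[int]_n) : word T :=
  flatten [seq zpow (basis_word i) (c 0 i) | i <- enum 'I_n].

Lemma comb_word_over (c : 'rV[int]_n) : word_over S (comb_word c).
Proof.
apply: word_over_flatten; apply/allP => s /mapP [i _ ->].
exact/word_over_zpow/basis_word_over.
Qed.

Lemma evalw_comb_word (c : 'rV[int]_n) : evalw phi (comb_word c) = c *m B.
Proof.
rewrite evalw_flatten big_map mulmx_sum_row big_enum /=; apply: eq_bigr => i _.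
by rewrite evalw_zpow evalw_basis_word -scaler_int intz.
Qed.

Lemma comb_word_del (c : 'rV[int]_n) : (forall j : 'I_n, (r <= j)%N -> c 0 j = 0) ->
  pequiv R'' (del (comb_word c)) [::].
Proof.
move=> c_head; rewrite /comb_word /delete_gens filter_flatten -map_comp.
apply: flatten_triv => s /List.in_map_iff [i [<- _]] /=; rewrite -/(del _) del_zpow.
have [lt_ir | le_ri] := ltnP i r; first exact/zpow_triv/rel_triv/R''_new_rel.
by rewrite c_head //; apply: rst_refl.
Qed.

(* Injectivity: a word over S \ S' killed by quot_map is trivial in
   <S \ S' | R''>.  Multiply it by a combination of the w_i to get a word
   trivial in <S | R>, and delete S' along the derivation. *)
Lemma quot_complete w : word_over (S :\: S') w -> evalw quot_map w = 0 ->
  pequiv R'' w [::].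
Proof.
move=> wS w0; set c := evalw phi w *m invmx B.
have c_head (j : 'I_n) : (r <= j)%N -> (- c) 0 j = 0.
  by move=> le_rj; rewrite mxE (proj1 (quot_mx_eq0 _) _ j le_rj) ?oppr0 // -evalw_quot.
have wW : pequiv R (w ++ comb_word (- c)) [::].
  apply/phi_iso.1; first by rewrite word_over_cat (over_setD wS) comb_word_over.
  by rewrite evalw_cat evalw_comb_word mulNmx /c mulmxKV // addrN.
have := del_pequiv R''_rel wW; rewrite del_cat (del_over wS) => wW''.
apply: rst_trans wW''.
by have := pequiv_cat (rst_refl _ _ w) (rst_sym _ _ _ _ (comb_word_del c_head)); rewrite cats0.
Qed.

Lemma quot_surj v : exists2 w, word_over (S :\: S') w & evalw quot_map w = v.
Proof.
have [w wS wv] := phi_iso.2 (v *m (@tail_proj int n r)^T *m B).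
exists (del w); first exact: over_del.
by rewrite evalw_quot_del evalw_quot wv /quot_mx mulmxA mulmxK // tail_projK.
Qed.

Lemma quot_iso : pres_iso (S :\: S') R'' quot_map.
Proof.
split=> [w wS|]; last exact: quot_surj.
by split; [apply: quot_complete | apply: quot_sound].
Qed.

End Quotient.


Theorem mainTheorem15 (T : finType) (S S' : {set T}) (R : seq (word T))
  (n : nat) (phi : T -> 'rV[int]_n) :
  three_pres S R -> pres_iso S R phi -> S' \subset S ->
  let d := dimgen phi S' in
  exists ws : seq (word T),
    [/\ size ws = d, all (word_over S) ws &
      let R'' := map (delete_gens S') (R ++ ws) in
      pres_isoZn (S :\: S') R'' (n - d) /\ size R'' = (size R + d)%N].
Proof.
move=> three_R phi_iso _ d.
have R_over : all (word_over S) R by apply/allP => w /(allP three_R) /andP [].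
pose X := [seq phi g | g <- enum S'].
have [r [B [B_unit rankX X_head]]] := int_rank_normal_form Reals.Rdefinitions.R (rows_mx X).
have d_r : d = r by rewrite /d dimgen_rank.
have le_rn : (r <= n)%N by rewrite -rankX rank_leq_col.
have S'_head g (j : 'I_n) : g \in S' -> (r <= j)%N -> (phi g *m invmx B) 0 j = 0.
  move=> gS' le_rj; have g_idx : (index g (enum S') < size X)%N.
    by rewrite size_map index_mem mem_enum.
  have -> : phi g = row (Ordinal g_idx) (rows_mx X).
    by rewrite rowK (nth_map g) ?nth_index ?index_mem ?mem_enum.
  by rewrite -row_mul mxE X_head.
rewrite d_r; exists (new_rels phi_iso r B); split.
- exact: size_new_rels.
- exact: new_rels_over.
split; first by exists (quot_map phi r B); apply: quot_iso.
by rewrite size_map size_cat size_new_rels.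
Qed.
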